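(* If $A,B\in\mathcal{D}$ and $d(A)<d(B)$, then there exists $D\in\mathcal{D}$ such that $A\cap B\subseteq D\subseteq B$ and $d(D)=d(A)$.
   Context: $\mathbb{N}=\{1,2,3,\dots\}$. For $A\subseteq\mathbb{N}$ let $A(n)=|A\cap[1,n]|$. Let $\mathcal{D}$ be the collection of all $A\subseteq\mathbb{N}$ for which the asymptotic density $d(A)=\lim_{n\to\infty}\frac{A(n)}{n}$ exists. *)

From Stdlib Require Import Reals Arith.
Open Scope R_scope.

(* A subset of N = {1,2,3,...} is represented by its characteristic function
   A : nat -> bool; only the values A k for k >= 1 matter. *)
Definition natset := nat -> bool.

Fixpoint count_upto (A : natset) (n : nat) : nat :=
  match n with
  | O => O
  | S m => (count_upto A m + (if A (S m) then 1 else 0))%nat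
  end.

Definition has_density (A : natset) (l : R) : Prop :=
  Un_cv (fun n => INR (count_upto A (S n)) / INR (S n)) l.

Definition subset_N (A B : natset) : Prop :=
  forall k : nat, (1 <= k)%nat -> A k = true -> B k = true.

Definition inter (A B : natset) : natset := fun k => andb (A k) (B k).

(* Walk through B and keep an element k when it lies in A, or when the number
   D(k-1) of elements kept so far is still below A(k).  Then D(n) <= A(n), and
   if m <= n is the last time an element of B was refused (so D(m) = A(m)),
   every element of B in (m, n] has been kept, so
     0 <= A(n) - D(n) <= (A(n) - B(n)) - (A(m) - B(m)).
   Since (A(n) - B(n))/n tends to d(A) - d(B) <= 0, the excess of A - B over
   its running minimum is o(n); hence d(D) = d(A). *)

From Stdlib Require Import Reals Lra Lia Arith.
Open Scope R_scope.

Lemma count_upto_le (X : natset) (n : nat) : (count_upto X n <= n)%nat.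
Proof. induction n as [|n IH]; simpl; [lia|]. destruct (X (S n)); lia. Qed.

Lemma Un_cv_ratio_linear_bound (x : nat -> R) (c : R) :
  Un_cv (fun n => x (S n) / INR (S n)) c ->
  forall e, 0 < e -> exists N, forall n, (N <= n)%nat ->
    c * INR (S n) - e * INR (S n) < x (S n) < c * INR (S n) + e * INR (S n).
Proof.
  intros Hx e He. destruct (Hx e He) as [N HN]. exists N. intros n Hn.
  specialize (HN n Hn). unfold R_dist in HN. apply Rabs_def2 in HN.
  assert (Hj : 0 < INR (S n)) by (apply lt_0_INR; lia).
  replace (x (S n)) with (x (S n) / INR (S n) * INR (S n)) by (field; lra).
  split; nra.
Qed.

Lemma Un_cv_ratio_0 (h : nat -> R) :
  (forall n, 0 <= h n) ->
  (forall e, 0 < e -> exists N, forall n, (N <= n)%nat -> h (S n) <= e * INR (S n)) ->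
  Un_cv (fun n => h (S n) / INR (S n)) 0.
Proof.
  intros Hpos Hh eps Heps. destruct (Hh (eps / 2) ltac:(lra)) as [N HN].
  exists N. intros n Hn. specialize (HN n Hn). unfold R_dist.
  assert (Hj : 0 < INR (S n)) by (apply lt_0_INR; lia).
  rewrite Rminus_0_r, Rabs_right.
  - apply (Rmult_lt_reg_r (INR (S n))); [lra|].
    unfold Rdiv. rewrite Rmult_assoc, Rinv_l by lra. nra.
  - apply Rle_ge, Rmult_le_pos; [apply Hpos | left; apply Rinv_0_lt_compat; lra].
Qed.

(* The hypothesis [- INR m <= g m] bounds g below on the finitely many early
   indices, where the density estimate gives no information. *)
Lemma excess_over_prefix_sublinear (g : nat -> R) (c : R) :
  (forall m, - INR m <= g m) ->
  Un_cv (fun n => g (S n) / INR (S n)) c -> c <= 0 ->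
  forall e, 0 < e -> exists N, forall n m, (N <= n)%nat -> (m <= S n)%nat ->
    g (S n) - g m <= e * INR (S n).
Proof.
  intros Hlow Hg Hc e He.
  destruct (Un_cv_ratio_linear_bound g c Hg (e / 2) ltac:(lra)) as [N HN].
  destruct (INR_archimed (e / 2) (INR N) ltac:(lra)) as [K HK].
  exists (Nat.max N K). intros n m Hn Hm.
  assert (HKj : INR K <= INR (S n)) by (apply le_INR; lia).
  assert (Hmj : INR m <= INR (S n)) by (apply le_INR; lia).
  assert (Hj : 0 < INR (S n)) by (apply lt_0_INR; lia).
  assert (Hcj : c * INR (S n) <= 0) by nra.
  destruct (HN n ltac:(lia)) as [_ Hup].
  destruct (le_lt_dec m N) as [Hearly | Hlate].
  - assert (INR m <= INR N) by (apply le_INR; lia).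
    assert (INR N < e / 2 * INR (S n)) by nra.
    specialize (Hlow m). lra.
  - destruct m as [|m']; [lia|].
    destruct (HN m' ltac:(lia)) as [Hdown _]. nra.
Qed.

Section Greedy.
Variables A B : natset.

Definition greedy_take (k kept : nat) : bool :=
  B k && (A k || Nat.ltb kept (count_upto A k)).

Fixpoint greedy_count (n : nat) : nat :=
  match n with
  | O => O
  | S m => (greedy_count m + (if greedy_take (S m) (greedy_count m) then 1 else 0))%nat
  end.

Definition greedy_set : natset := fun k =>
  match k with O => false | S m => greedy_take (S m) (greedy_count m) end.

Lemma count_greedy_set (n : nat) : count_upto greedy_set n = greedy_count n.
Proof. induction n; simpl; auto. Qed.

Lemma greedy_count_le (n : nat) : (greedy_count n <= count_upto A n)%nat.
Proof.
  induction n as [|n IH]; [simpl; lia|]. simpl; unfold greedy_take; simpl.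
  destruct (A (S n)), (B (S n)); simpl; try lia.
  destruct (Nat.ltb_spec (greedy_count n) (count_upto A n + 0)); lia.
Qed.

Lemma greedy_catch_up (n : nat) : exists m, (m <= n)%nat /\
  (count_upto B n + count_upto A m <= greedy_count n + count_upto B m)%nat.
Proof.
  induction n as [|n [m [Hm IH]]].
  - exists O. simpl. lia.
  - pose proof (greedy_count_le n) as Hle. simpl; unfold greedy_take; simpl.
    destruct (A (S n)) eqn:EA, (B (S n)) eqn:EB; simpl;
      try (exists m; split; lia).
    destruct (Nat.ltb_spec (greedy_count n) (count_upto A n + 0)).
    + exists m. split; lia.
    + exists (S n). simpl. rewrite EA, EB. split; lia.
Qed.

Lemma inter_subset_greedy_set : subset_N (inter A B) greedy_set.
Proof.
  intros [|k] Hk Hin; [lia|]. unfold inter in Hin.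
  apply andb_prop in Hin as [HA HB].
  simpl. unfold greedy_take. now rewrite HA, HB.
Qed.

Lemma greedy_set_subset : subset_N greedy_set B.
Proof.
  intros [|k] Hk Hin; [lia|]. simpl in Hin. unfold greedy_take in Hin.
  now apply andb_prop in Hin as [HB _].
Qed.

Lemma greedy_set_density (dA dB : R) :
  has_density A dA -> has_density B dB -> dA <= dB ->
  has_density greedy_set dA.
Proof.
  intros HA HB Hle.
  set (g n := INR (count_upto A n) - INR (count_upto B n)).
  set (h n := INR (count_upto A n) - INR (count_upto greedy_set n)).
  assert (Hg : Un_cv (fun n => g (S n) / INR (S n)) (dA - dB)).
  { apply Un_cv_ext with (2 := CV_minus _ _ _ _ HA HB).
    intro n. unfold g, Rdiv. ring. }
  assert (Hlow : forall m, - INR m <= g m).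
  { intro m. unfold g. pose proof (pos_INR (count_upto A m)).
    pose proof (le_INR _ _ (count_upto_le B m)). lra. }
  assert (Hexcess : Un_cv (fun n => h (S n) / INR (S n)) 0).
  { apply Un_cv_ratio_0.
    - intro n. unfold h. rewrite count_greedy_set.
      pose proof (le_INR _ _ (greedy_count_le n)). lra.
    - intros e He.
      destruct (excess_over_prefix_sublinear g (dA - dB) Hlow Hg ltac:(lra) e He)
        as [N HN].
      exists N. intros n Hn.
      destruct (greedy_catch_up (S n)) as [m [Hm Hcatch]].
      specialize (HN n m Hn Hm). apply le_INR in Hcatch. rewrite !plus_INR in Hcatch.
      unfold g, h in *. rewrite count_greedy_set. lra. }
  unfold has_density.
  apply Un_cv_ext with (fun n => INR (count_upto A (S n)) / INR (S n) - h (S n) / INR (S n)).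
  - intro n. unfold h, Rdiv. ring.
  - replace dA with (dA - 0) by ring. now apply CV_minus.
Qed.

End Greedy.

Theorem lemma3p4 (A B : natset) (dA dB : R) :
  has_density A dA -> has_density B dB -> dA < dB ->
  exists D : natset,
    has_density D dA /\ subset_N (inter A B) D /\ subset_N D B.
Proof.
  intros HA HB Hlt. exists (greedy_set A B). split; [|split].
  - apply greedy_set_density with dB; [assumption | assumption | lra].
  - apply inter_subset_greedy_set.
  - apply greedy_set_subset.
Qed.
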